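(* Let $G$ be a cubic graph, let $M$ be a perfect matching cut of $G$, and let $C$ be an induced $4$-vertex cycle of $G$. Then exactly one of the following holds: (a) $E(C) \cap M = \emptyset$ and all four outgoing edges of $V(C)$ belong to $M$; (b) $|E(C) \cap M| = 2$, the two edges of $E(C) \cap M$ are vertex-disjoint, and no outgoing edge of $V(C)$ belongs to $M$.
   Context: All graphs are finite, simple and undirected; a graph is cubic if every vertex has exactly three neighbours. A cutset of $G$ is a set $M \subseteq E(G)$ for which there is a bipartition $X \uplus Y = V(G)$ into two nonempty sets such that $M$ is exactly the set of edges with one endpoint in $X$ and one in $Y$. A perfect matching cut is a perfect matching (a set of edges covering every vertex exactly once) that is also a cutset. For $U \subseteq V(G)$, the outgoing edges of $U$ are the edges of $G$ with exactly one endpoint in $U$. For a subgraph $C$, $E(C)$ and $V(C)$ denote its edge set and vertex set. *)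

From mathcomp Require Import all_boot.
Set Implicit Arguments. Unset Strict Implicit. Unset Printing Implicit Defensive.

Section Graphs.
Variable T : finType.

Definition simple_graph (e : rel T) : Prop :=
  symmetric e /\ irreflexive e.

Definition edges (e : rel T) : {set {set T}} :=
  [set [set x; y] | x in T, y in T & e x y].

Definition cubic (e : rel T) : Prop :=
  forall v : T, #|[set w | e v w]| = 3.

Definition perfect_matching (e : rel T) (M : {set {set T}}) : Prop :=
  M \subset edges e /\ forall v : T, #|[set f in M | v \in f]| = 1.

Definition outgoing (e : rel T) (X : {set T}) : {set {set T}} :=
  [set f in edges e | #|f :&: X| == 1].

Definition cutset (e : rel T) (M : {set {set T}}) : Prop :=
  exists X : {set T}, [/\ X != set0, ~: X != set0 & M = outgoing e X].

Definition perfect_matching_cut (e : rel T) (M : {set {set T}}) : Prop :=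
  perfect_matching e M /\ cutset e M.

Definition induced_C4 (e : rel T) (a b c d : T) : Prop :=
  uniq [:: a; b; c; d] /\
  [/\ e a b, e b c, e c d & e d a] /\ ~~ e a c /\ ~~ e b d.

Definition C4_vertices (a b c d : T) : {set T} := [set a; b; c; d].

Definition C4_edges (a b c d : T) : {set {set T}} :=
  [set [set a; b]; [set b; c]; [set c; d]; [set d; a]].

End Graphs.

(* In a perfect matching cut M = outgoing X every vertex has exactly one
   neighbour across the cut, so consecutive edges of the 4-cycle a b c d are
   never both in M, while the number of cycle edges crossing the cut is even.
   Hence M meets the cycle in no edge or in a pair of opposite edges. In the
   first case each cycle vertex is matched neither to its two cycle neighbours
   nor to the non-adjacent opposite vertex, so by cubicity it is matched along
   its outgoing edge; in the second case every cycle vertex is already matched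
   inside the cycle, so no outgoing edge is in M. *)
From mathcomp Require Import all_boot.
Set Implicit Arguments. Unset Strict Implicit. Unset Printing Implicit Defensive.

Section Set2.
Variable T : finType.
Implicit Types (x y z : T) (X : {set T}).

Lemma cards1I x X : #|[set x] :&: X| = (x \in X).
Proof.
have [xX|xNX] := boolP (x \in X); first by rewrite (setIidPl _) ?sub1set ?cards1.
by rewrite disjoint_setI0 ?cards0 // disjoints1.
Qed.

Lemma cards2I x y X : x != y -> #|[set x; y] :&: X| = (x \in X) + (y \in X).
Proof.
move=> nxy; rewrite setIUl cardsU !cards1I setIACA setIid.
suff -> : [set x] :&: [set y] = set0 by rewrite set0I cards0 subn0.
by apply/setP => z; rewrite !inE; apply/andP => -[/eqP-> /eqP yx]; rewrite yx eqxx in nxy.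
Qed.

Lemma set2_injr x y z : [set x; y] = [set x; z] -> y = z.
Proof.
move=> Exy; have /set2P[yx|//] : y \in [set x; z] by rewrite -Exy set22.
have /set2P[zx|//] : z \in [set x; y] by rewrite Exy set22.
by rewrite yx zx.
Qed.

Lemma disjoint_set2 x y (A : {set T}) :
  x \notin A -> y \notin A -> [disjoint [set x; y] & A].
Proof.
move=> xNA yNA; rewrite disjoints_subset; apply/subsetP => z.
by rewrite !inE => /orP[]/eqP->.
Qed.

End Set2.

Lemma C4_vertices_rot (T : finType) (a b c d : T) :
  C4_vertices b c d a = C4_vertices a b c d.
Proof. by apply/setP => x; rewrite !inE orbC !orbA. Qed.

Lemma C4_edges_rot (T : finType) (a b c d : T) :
  C4_edges b c d a = C4_edges a b c d.
Proof. by apply/setP => f; rewrite !inE orbC !orbA. Qed.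

Lemma C4_edgesI_eq0 (T : finType) (a b c d : T) (M : {set {set T}}) :
  (C4_edges a b c d :&: M == set0) =
  ~~ [|| [set a; b] \in M, [set b; c] \in M, [set c; d] \in M | [set d; a] \in M].
Proof. by rewrite !setIUl !setU_eq0 !setI_eq0 !disjoints1 !negb_or !andbA. Qed.

Section Graph.
Variables (T : finType) (e : rel T).
Hypothesis sg : simple_graph e.

Lemma induced_C4_rot a b c d : induced_C4 e a b c d -> induced_C4 e b c d a.
Proof.
case=> uabcd [[eab ebc ecd eda] [nac nbd]]; split; first by rewrite -(rot_uniq 3).
by do 2!split=> //; rewrite (proj1 sg).
Qed.

Lemma induced_C4_opposite_neq a b c d : induced_C4 e a b c d -> a != c.
Proof. by case=> uabcd _; apply: contraTneq uabcd => ->; rewrite /= !inE eqxx !orbT. Qed.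

Lemma mem_edges x y : e x y -> [set x; y] \in edges e.
Proof. by move=> exy; apply/imset2P; exists x y; rewrite ?inE. Qed.

Lemma mem_outgoing X x y :
  e x y -> ([set x; y] \in outgoing e X) = ((x \in X) != (y \in X)).
Proof.
move=> exy; have nxy : x != y by apply: contraTneq exy => ->; rewrite (proj2 sg).
by rewrite inE mem_edges // cards2I //; case: (x \in X); case: (y \in X).
Qed.

Lemma edgesP f : f \in edges e -> exists x y, e x y /\ f = [set x; y].
Proof. by case/imset2P => x y _; rewrite inE => exy ->; exists x, y. Qed.

Lemma outgoingP X f : f \in outgoing e X ->
  exists x y, [/\ f = [set x; y], e x y, x \in X & y \notin X].
Proof.
move=> fX; have := fX; rewrite inE => /andP[/edgesP[x [y [exy Ef]]] _].
move: fX; rewrite Ef mem_outgoing //.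
case xX: (x \in X); case yX: (y \in X) => // _; first by exists x, y; rewrite yX.
by exists y, x; rewrite setUC (proj1 sg) xX.
Qed.

Lemma outgoing_cycle4_even X a b c d :
  e a b -> e b c -> e c d -> e d a ->
  ([set a; b] \in outgoing e X) (+) ([set b; c] \in outgoing e X) =
  ([set c; d] \in outgoing e X) (+) ([set d; a] \in outgoing e X).
Proof.
move=> eab ebc ecd eda; rewrite !mem_outgoing //.
by case: (a \in X); case: (b \in X); case: (c \in X); case: (d \in X).
Qed.

Lemma cubic_neighbour_mem x p q y z :
  cubic e -> e x p -> e x q -> e x y -> e x z -> uniq [:: p; q; y] ->
  z \in [:: p; q; y].
Proof.
move=> cub exp exq exy exz upqy; apply: contraT => zN.
have : size [:: p; q; y; z] <= #|[set w | e x w]|.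
  rewrite cardE; apply: uniq_leq_size.
    by rewrite (cat_uniq [:: p; q; y] [:: z]) upqy /= orbF zN.
  by move=> w; rewrite mem_enum !inE => /or4P[]/eqP->.
by rewrite cub.
Qed.

Section PerfectMatching.
Variable M : {set {set T}}.
Hypothesis pmM : perfect_matching e M.

Lemma perfect_matching_partner v : exists2 w, e v w & [set v; w] \in M.
Proof.
have : 0 < #|[set f in M | v \in f]| by rewrite (proj2 pmM).
case/card_gt0P => f; rewrite inE => /andP[fM vf].
have [x [y [exy Ef]]] := edgesP (subsetP (proj1 pmM) f fM).
move: vf fM; rewrite Ef => /set2P[->|->] fM; first by exists y.
by exists x; rewrite 1?setUC // (proj1 sg).
Qed.

Lemma perfect_matching_partner_uniq v y z :
  [set v; y] \in M -> [set v; z] \in M -> y = z.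
Proof.
move=> vyM vzM; have /eqP/cards1P[f0 Ef0] := proj2 pmM v.
have : [set v; y] \in [set f in M | v \in f] by rewrite inE vyM set21.
have : [set v; z] \in [set f in M | v \in f] by rewrite inE vzM set21.
by rewrite Ef0 !inE => /eqP vz /eqP vy; apply: (@set2_injr _ v); rewrite vy vz.
Qed.

Lemma perfect_matching_third_neighbour x p q y :
  cubic e -> e x p -> e x q -> p != q ->
  [set x; p] \notin M -> [set x; q] \notin M ->
  e x y -> y != p -> y != q -> [set x; y] \in M.
Proof.
move=> cub exp exq npq xpNM xqNM exy nyp nyq.
have [z exz xzM] := perfect_matching_partner x.
have upqy : uniq [:: p; q; y] by rewrite /= !inE negb_or npq !(eq_sym _ y) nyp nyq.
have := cubic_neighbour_mem cub exp exq exy exz upqy.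
rewrite !inE => /or3P[]/eqP zE; subst z.
- by rewrite xzM in xpNM.
- by rewrite xzM in xqNM.
- exact: xzM.
Qed.

Lemma C4_matched_consecutive a b c d :
  induced_C4 e a b c d -> ~~ (([set a; b] \in M) && ([set b; c] \in M)).
Proof.
move=> C4; apply/andP => -[abM bcM].
have /eqP := induced_C4_opposite_neq C4; apply.
by apply: perfect_matching_partner_uniq bcM; rewrite setUC.
Qed.

Lemma C4_matched_cases X a b c d :
  M = outgoing e X -> induced_C4 e a b c d ->
  [\/ C4_edges a b c d :&: M = set0,
      [set a; b] \in M /\ [set c; d] \in M
    | [set b; c] \in M /\ [set d; a] \in M].
Proof.
move=> cutM C4; have [_ [[eab ebc ecd eda] _]] := C4.
have C4' := induced_C4_rot C4; have C4'' := induced_C4_rot C4'.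
have := outgoing_cycle4_even X eab ebc ecd eda; rewrite -cutM.
move: (C4_matched_consecutive C4) (C4_matched_consecutive C4').
move: (C4_matched_consecutive C4'') (C4_matched_consecutive (induced_C4_rot C4'')).
case Eab: ([set a; b] \in M); case Ebc: ([set b; c] \in M);
  case Ecd: ([set c; d] \in M); case Eda: ([set d; a] \in M) => //= *.
all: by [constructor 2 | constructor 3 |
         constructor 1; apply/eqP; rewrite C4_edgesI_eq0 Eab Ebc Ecd Eda].
Qed.

Lemma C4_unmatched_vertex a b c d y :
  cubic e -> induced_C4 e a b c d -> C4_edges a b c d :&: M = set0 ->
  e a y -> y \notin C4_vertices a b c d -> [set a; y] \in M.
Proof.
move=> cub C4 EM0 eay yNV; have [_ [[eab _ _ eda] _]] := C4.
move/eqP: EM0; rewrite C4_edgesI_eq0 !negb_or => /and4P[abNM _ _ daNM].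
have ead : e a d by rewrite (proj1 sg).
have nbd := induced_C4_opposite_neq (induced_C4_rot C4).
apply: (perfect_matching_third_neighbour cub eab ead nbd _ _ eay).
- exact: abNM.
- by rewrite setUC.
- by apply: contraNneq yNV => ->; rewrite !inE eqxx !orbT.
- by apply: contraNneq yNV => ->; rewrite !inE eqxx !orbT.
Qed.

Lemma C4_unmatched_outgoing a b c d :
  cubic e -> induced_C4 e a b c d -> C4_edges a b c d :&: M = set0 ->
  outgoing e (C4_vertices a b c d) \subset M.
Proof.
move=> cub C4 EM0; have C4' := induced_C4_rot C4; have C4'' := induced_C4_rot C4'.
have EM0' : C4_edges b c d a :&: M = set0 by rewrite C4_edges_rot.
have EM0'' : C4_edges c d a b :&: M = set0 by rewrite C4_edges_rot.
have EM0''' : C4_edges d a b c :&: M = set0 by rewrite C4_edges_rot.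
apply/subsetP => _ /outgoingP[x [y [-> exy xV yNV]]].
have yNV' : y \notin C4_vertices b c d a by rewrite C4_vertices_rot.
have yNV'' : y \notin C4_vertices c d a b by rewrite C4_vertices_rot.
have yNV''' : y \notin C4_vertices d a b c by rewrite C4_vertices_rot.
move: xV exy; rewrite !inE -!orbA => /or4P[]/eqP-> exy.
- exact: C4_unmatched_vertex C4 EM0 exy yNV.
- exact: C4_unmatched_vertex C4' EM0' exy yNV'.
- exact: C4_unmatched_vertex C4'' EM0'' exy yNV''.
- exact: C4_unmatched_vertex (induced_C4_rot C4'') EM0''' exy yNV'''.
Qed.

Lemma C4_opposite_matched a b c d :
  induced_C4 e a b c d -> [set a; b] \in M -> [set c; d] \in M ->
  [/\ #|C4_edges a b c d :&: M| = 2,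
      (forall f g, f \in C4_edges a b c d :&: M -> g \in C4_edges a b c d :&: M ->
         f != g -> [disjoint f & g])
    & [disjoint outgoing e (C4_vertices a b c d) & M]].
Proof.
move=> C4 abM cdM.
have bcNM : [set b; c] \notin M by move: (C4_matched_consecutive C4); rewrite abM.
have daNM : [set d; a] \notin M.
  have C4''' := induced_C4_rot (induced_C4_rot (induced_C4_rot C4)).
  by move: (C4_matched_consecutive C4'''); rewrite abM andbT.
have [uabcd _] := C4; move: uabcd; rewrite /= !inE !negb_or.
case/and4P => /and3P[_ ac ad] /andP[bc bd] _ _.
have ab_cd : [disjoint [set a; b] & [set c; d]].
  by apply: disjoint_set2; rewrite !inE negb_or ?ac ?ad ?bc ?bd.
have EM : C4_edges a b c d :&: M = [set [set a; b]; [set c; d]].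
  apply/setP => f; rewrite !inE -!orbA.
  apply/andP/orP => [[/or4P[]/eqP-> fM] | [] /eqP->]; rewrite ?eqxx ?orbT ?abM ?cdM //.
  - by left.
  - by case/negP: bcNM.
  - by right.
  - by case/negP: daNM.
have partner x : x \in C4_vertices a b c d -> exists2 w, w \in C4_vertices a b c d
  & [set x; w] \in M.
  rewrite !inE -!orbA => /or4P[]/eqP->.
  - by exists b; rewrite ?inE ?eqxx ?orbT.
  - by exists a; rewrite ?inE ?eqxx ?orbT // setUC.
  - by exists d; rewrite ?inE ?eqxx ?orbT.
  - by exists c; rewrite ?inE ?eqxx ?orbT // setUC.
split.
- rewrite EM cards2 (_ : [set a; b] != [set c; d]) //.
  by apply: contraTneq (set21 a b) => ->; rewrite !inE negb_or ac ad.
- move=> f g; rewrite EM !inE => /orP[]/eqP-> /orP[]/eqP-> //; rewrite ?eqxx // => _.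
  by rewrite disjoint_sym.
- rewrite disjoints_subset; apply/subsetP => _ /outgoingP[x [y [-> _ xV yNV]]].
  rewrite inE; apply: contraNN yNV => xyM; have [w wV xwM] := partner x xV.
  by rewrite (perfect_matching_partner_uniq xyM xwM).
Qed.

End PerfectMatching.
End Graph.

Theorem lemma3 (T : finType) (e : rel T) (M : {set {set T}}) (a b c d : T) :
  simple_graph e -> cubic e -> perfect_matching_cut e M ->
  induced_C4 e a b c d ->
  let EC := C4_edges a b c d in
  let out := outgoing e (C4_vertices a b c d) in
  let A := (EC :&: M = set0) /\ out \subset M in
  let B := [/\ #|EC :&: M| = 2,
               (forall f g, f \in EC :&: M -> g \in EC :&: M -> f != g ->
                  [disjoint f & g])
             & [disjoint out & M]] in
  (A \/ B) /\ ~ (A /\ B).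
Proof.
move=> sg cub [pmM [X [_ _ cutM]]] C4; cbv zeta.
split; last by case=> -[-> _] [+ _ _]; rewrite cards0.
have [EM0 | [abM cdM] | [bcM daM]] := C4_matched_cases sg pmM cutM C4.
- by left; split; last exact: C4_unmatched_outgoing.
- by right; apply: C4_opposite_matched.
- right; have := C4_opposite_matched sg pmM (induced_C4_rot sg C4) bcM daM.
  by rewrite C4_edges_rot C4_vertices_rot.
Qed.
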